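(* Let $c>0$, let $v\in\mathbb{R}^d$, and let $\xi$ be a random vector in $\mathbb{R}^d$ with density $\tilde p$ satisfying $\tilde p(\xi)=\tilde p(-\xi)$ for all $\xi$. Let $g=\mathrm{clip}(v+\xi,c)$. Then: 1. If $\|v\|\le\frac34 c$, then $\mathbb{E}_{\xi\sim\tilde p}[\langle v,g\rangle]\ge\|v\|^2\,\mathbb{P}_{\xi\sim\tilde p}\left(\|\xi\|<\frac c4\right)$. 2. If $\|v\|>\frac34 c$, then $\mathbb{E}_{\xi\sim\tilde p}[\langle v,g\rangle]\ge\frac34 c\,\|v\|\,\mathbb{P}_{\xi\sim\tilde p}\left(\|\xi\|<\frac c4\right)$.
   Context: For $g\in\mathbb{R}^d$ and $c>0$, $\mathrm{clip}(g,c)=g\cdot\min\left(1,\frac{c}{\|g\|}\right)$ (with $\mathrm{clip}(0,c)=0$); $\|\cdot\|$ is the Euclidean norm. In the paper $v$ is the true gradient $\nabla f(x_t)$ at the current iterate and $\xi$ the gradient noise. *)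

From HB Require Import structures.
From mathcomp Require Import all_boot all_order all_algebra.
From mathcomp Require Import all_classical all_reals all_analysis.
Set Implicit Arguments. Unset Strict Implicit. Unset Printing Implicit Defensive.
Import Order.TTheory GRing.Theory Num.Theory.
Import numFieldNormedType.Exports.
Local Open Scope classical_set_scope.
Local Open Scope ring_scope.

Definition dotv (R : realType) (d : nat) (u w : 'rV[R]_d) : R :=
  \sum_(i < d) u ord0 i * w ord0 i.

Definition enorm (R : realType) (d : nat) (u : 'rV[R]_d) : R :=
  Num.sqrt (dotv u u).

Definition clip (R : realType) (d : nat) (g : 'rV[R]_d) (c : R) : 'rV[R]_d :=
  if g == 0 then 0 else Num.min 1 (c / enorm g) *: g.

Definition box (R : realType) (d : nat) (a b : 'rV[R]_d) : set 'rV[R]_d :=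
  [set x | forall i : 'I_d, a ord0 i < x ord0 i <= b ord0 i].

Definition boxes (R : realType) (d : nat) : set (set 'rV[R]_d) :=
  [set A | exists a b, A = box a b].

(** R^d with its Borel sigma-algebra (generated by the half-open boxes). *)
Definition Rd (R : realType) (d : nat) := g_sigma_algebraType (@boxes R d).

(** [lam] is Lebesgue measure on R^d: it gives every box its volume.
    (This determines lam uniquely on the Borel sets.) *)
Definition is_lebesgue_Rd (R : realType) (d : nat)
    (lam : {measure set (Rd R d) -> \bar R}) : Prop :=
  forall a b : 'rV[R]_d,
    lam (box a b) = (\prod_(i < d) Num.max (b ord0 i - a ord0 i) 0)%:E.

Definition is_density (R : realType) (d : nat)
    (lam : {measure set (Rd R d) -> \bar R}) (p : Rd R d -> R) : Prop :=
  [/\ measurable_fun setT p, (forall x, 0 <= p x)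
    & (\int[lam]_x (p x)%:E = 1)%E].

Definition dexpect (R : realType) (d : nat)
    (lam : {measure set (Rd R d) -> \bar R}) (p : Rd R d -> R)
    (f : Rd R d -> R) : \bar R :=
  (\int[lam]_x (p x * f x)%:E)%E.

Definition dprob (R : realType) (d : nat)
    (lam : {measure set (Rd R d) -> \bar R}) (p : Rd R d -> R)
    (A : set (Rd R d)) : \bar R :=
  (\int[lam]_(x in A) (p x)%:E)%E.

From HB Require Import structures.
From mathcomp Require Import all_boot all_order all_algebra.
From mathcomp Require Import all_classical all_reals all_analysis.
From mathcomp Require Import measurable_realfun.
From mathcomp Require Import ring lra.
Import Order.TTheory GRing.Theory Num.Theory.
Import numFieldNormedType.Exports.
Local Open Scope classical_set_scope.
Local Open Scope ring_scope.

(* Write f(xi) = <v, clip(v + xi, c)>.  As p is even and xi |-> -xi preserves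
   Lebesgue measure, 2 E = E[f(xi) + f(-xi)].  Since clip u c = c / max(|u|, c) * u,
   this symmetrised integrand is a function of s = |v|, r = |xi|, t = <v, xi> and
   |v +- xi| only, and elementary estimates (Cauchy-Schwarz, comparison of squares)
   show that it is always nonnegative, equals 2 s^2 when s + r <= c, and is at least
   (3/2) c s when s > 3c/4 and r < c/4.  Integrating these bounds over {|xi| < c/4}
   gives both claims.  Reflection invariance of Lebesgue measure comes from the
   uniqueness of measures agreeing on a generating pi-system: the open boxes, which
   negation maps to open boxes and whose volumes are limits of half-open ones. *)

Section symmetrised_clip.
Context {R : realFieldType}.

(* With s = |v|, t = <v, xi>, a = |v + xi| and b = |v - xi|, [sym_clip c s t a b] is
   <v, clip(v + xi, c)> + <v, clip(v - xi, c)> (see [clip_symE]); below r = |xi|. *)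
Definition sym_clip (c s t a b : R) :=
  c * (s ^+ 2 + t) / Num.max a c + c * (s ^+ 2 - t) / Num.max b c.

Lemma small_shift_dot_ge (s r t a : R) : 0 <= s -> 0 <= r -> 0 <= a ->
  3 * r <= s -> `|t| <= s * r -> a ^+ 2 = s ^+ 2 + 2 * t + r ^+ 2 ->
  3 / 4 * s * a <= s ^+ 2 + t.
Proof.
move=> s_ge0 r_ge0 a_ge0 r_le; rewrite ler_norml => /andP[t_lb t_ub] a_sqr.
have rhs_ge0 : 0 <= s ^+ 2 + t.
  have : 0 <= s * (s - r) by apply: mulr_ge0; lra.
  nra.
rewrite -ler_sqr ?nnegrE ?mulr_ge0 // !exprMn a_sqr.
have r_sqr : 9 * r ^+ 2 <= s ^+ 2 by nra.
have : 9 * (s ^+ 2 * r ^+ 2) <= s ^+ 2 * s ^+ 2.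
  by rewrite mulrCA ler_wpM2l ?sqr_ge0.
have := sqr_ge0 (6 * s ^+ 2 + 7 * t).
nra.
Qed.

Lemma sym_clip_ge0 (c s r t a b : R) : 0 < c -> 0 <= s -> 0 <= r ->
  0 <= a -> 0 <= b -> 0 <= t -> t <= s * r ->
  a ^+ 2 = s ^+ 2 + 2 * t + r ^+ 2 -> b ^+ 2 = s ^+ 2 - 2 * t + r ^+ 2 ->
  0 <= sym_clip c s t a b.
Proof.
move=> c_gt0 s_ge0 r_ge0 a_ge0 b_ge0 t_ge0 t_le a_sqr b_sqr.
have max_gt0 y : 0 < Num.max y c by rewrite lt_max c_gt0 orbT.
have s2_ge0 := sqr_ge0 s.
have [t_le_s2|s2_lt_t] := leP t (s ^+ 2).
  by apply: addr_ge0; apply: divr_ge0; rewrite ?mulr_ge0 ?(ltW (max_gt0 _)); lra.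
have b_le_a : b <= a by rewrite -ler_sqr ?nnegrE // a_sqr b_sqr; lra.
(* Only the second term is negative, and (t - s^2) / b <= (s^2 + t) / a. *)
have cross : (t - s ^+ 2) * a <= (s ^+ 2 + t) * b.
  rewrite -ler_sqr ?nnegrE ?mulr_ge0 //; try lra.
  rewrite !exprMn a_sqr b_sqr.
  have : 0 <= t * (s ^+ 2 * r ^+ 2 - t ^+ 2) by apply: mulr_ge0; nra.
  nra.
rewrite /sym_clip -[s ^+ 2 - t]opprB mulrN mulNr subr_ge0.
rewrite ler_pdivrMr // mulrAC ler_pdivlMr // -!mulrA ler_pM2l //.
have [a_le_c|c_lt_a] := leP a c.
  by rewrite (max_r (le_trans b_le_a a_le_c)) ler_pM2r //; lra.
apply: le_trans cross _.
by apply: ler_wpM2l; [lra | rewrite le_max lexx].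
Qed.

Lemma sym_clip_ge_large (c s r t a b : R) : 0 < c -> 0 <= s -> 0 <= r ->
  0 <= a -> 0 <= b -> 0 <= t -> t <= s * r ->
  a ^+ 2 = s ^+ 2 + 2 * t + r ^+ 2 -> b ^+ 2 = s ^+ 2 - 2 * t + r ^+ 2 ->
  3 / 4 * c < s -> r < c / 4 -> 2 * (3 / 4 * c * s) <= sym_clip c s t a b.
Proof.
move=> c_gt0 s_ge0 r_ge0 a_ge0 b_ge0 t_ge0 t_le a_sqr b_sqr s_gt r_lt.
have t_abs : `|t| <= s * r by rewrite ger0_norm.
have shift_a : 3 / 4 * s * a <= s ^+ 2 + t.
  by apply: (small_shift_dot_ge s r) => //; lra.
have shift_b : 3 / 4 * s * b <= s ^+ 2 - t.
  by apply: (small_shift_dot_ge s r); rewrite ?normrN ?b_sqr ?mulrN //; lra.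
have clipped y w : c < y -> 3 / 4 * s * y <= w -> 3 / 4 * c * s <= c * w / y.
  by move=> c_lt_y le_w; rewrite ler_pdivlMr; nra.
have b_le_a : b <= a by rewrite -ler_sqr ?nnegrE // a_sqr b_sqr; lra.
have cancel_c w : c * w / c = w by rewrite mulrAC divff ?mul1r // gt_eqF.
rewrite /sym_clip; have [a_le_c|c_lt_a] := leP a c.
  by rewrite (max_r (le_trans b_le_a a_le_c)) !cancel_c; nra.
have [b_le_c|c_lt_b] := leP b c; last first.
  by have := clipped _ _ c_lt_a shift_a; have := clipped _ _ c_lt_b shift_b; lra.
rewrite cancel_c.
have a_le : a <= s + r.
  by rewrite -ler_sqr ?nnegrE ?addr_ge0 // a_sqr sqrrD -mulr_natl; lra.
have : c * (s ^+ 2 + t) / (s + r) <= c * (s ^+ 2 + t) / a.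
  by apply: ler_wpM2l; [nra | rewrite lef_pV2 ?posrE; lra].
suff : 2 * (3 / 4 * c * s) <= c * (s ^+ 2 + t) / (s + r) + (s ^+ 2 - t) by lra.
rewrite -lerBlDr ler_pdivlMr; last by lra.
(* The difference of the two sides is the sum of these two products. *)
have : 0 <= s * (s + r) * (s - r - c / 2) by apply: mulr_ge0; nra.
have : 0 <= (s * r - t) * (s + r - c) by apply: mulr_ge0; lra.
rewrite mulrBl; nra.
Qed.

End symmetrised_clip.

Section euclidean.
Context {R : realType} {d : nat}.
Implicit Types (u v w x : 'rV[R]_d) (k : R).

Lemma dotvC u w : dotv u w = dotv w u.
Proof. by apply: eq_bigr => i _; rewrite mulrC. Qed.

Lemma dotvDr u w x : dotv u (w + x) = dotv u w + dotv u x.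
Proof. by rewrite /dotv -big_split; apply: eq_bigr => i _; rewrite mxE mulrDr. Qed.

Lemma dotvZr u w k : dotv u (k *: w) = k * dotv u w.
Proof. by rewrite /dotv mulr_sumr; apply: eq_bigr => i _; rewrite mxE mulrCA. Qed.

Lemma dotvNr u w : dotv u (- w) = - dotv u w.
Proof. by rewrite -scaleN1r dotvZr mulN1r. Qed.

Lemma dotv0r u : dotv u 0 = 0.
Proof. by rewrite -(scale0r 0) dotvZr mul0r. Qed.

Lemma dotvDl u w x : dotv (w + x) u = dotv w u + dotv x u.
Proof. by rewrite dotvC dotvDr !(dotvC u). Qed.

Lemma dotvZl u w k : dotv (k *: w) u = k * dotv w u.
Proof. by rewrite dotvC dotvZr dotvC. Qed.

Lemma dotvNl u w : dotv (- w) u = - dotv w u.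
Proof. by rewrite dotvC dotvNr dotvC. Qed.

Lemma dotvv_ge0 u : 0 <= dotv u u.
Proof. by apply: sumr_ge0 => i _; rewrite -expr2 sqr_ge0. Qed.

Lemma dotvv_eq0 u : (dotv u u == 0) = (u == 0).
Proof.
apply/idP/eqP => [/eqP uu0|->]; last by rewrite dotv0r.
apply/rowP => i; apply/eqP; rewrite mxE -sqrf_eq0 expr2; apply/eqP.
by move/psumr_eq0P : uu0 => -> // j _; rewrite -expr2 sqr_ge0.
Qed.

Lemma sqr_dotv_le u w : dotv u w ^+ 2 <= dotv u u * dotv w w.
Proof.
have [->|w_neq0] := eqVneq w 0; first by rewrite !dotv0r expr0n mulr0.
have ww_gt0 : 0 < dotv w w by rewrite lt_def dotvv_eq0 w_neq0 dotvv_ge0.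
have := dotvv_ge0 (dotv w w *: u - dotv u w *: w).
rewrite !(dotvDl, dotvDr, dotvNl, dotvNr, dotvZl, dotvZr) (dotvC w u).
nra.
Qed.

Lemma enorm_ge0 u : 0 <= enorm u.
Proof. exact: sqrtr_ge0. Qed.

Lemma sqr_enorm u : enorm u ^+ 2 = dotv u u.
Proof. by rewrite sqr_sqrtr // dotvv_ge0. Qed.

Lemma enorm_eq0 u : (enorm u == 0) = (u == 0).
Proof. by rewrite -sqrf_eq0 sqr_enorm dotvv_eq0. Qed.

Lemma enormN u : enorm (- u) = enorm u.
Proof. by rewrite /enorm dotvNl dotvNr opprK. Qed.

Lemma sqr_enormD u w :
  enorm (u + w) ^+ 2 = enorm u ^+ 2 + 2 * dotv u w + enorm w ^+ 2.
Proof. by rewrite !sqr_enorm dotvDl !dotvDr (dotvC w u); ring. Qed.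

Lemma sqr_enormB u w :
  enorm (u - w) ^+ 2 = enorm u ^+ 2 - 2 * dotv u w + enorm w ^+ 2.
Proof. by rewrite sqr_enormD enormN dotvNr mulrN. Qed.

Lemma normr_dotv_le u w : `|dotv u w| <= enorm u * enorm w.
Proof.
rewrite -ler_sqr ?nnegrE ?mulr_ge0 ?enorm_ge0 //.
by rewrite real_normK ?num_real // exprMn !sqr_enorm sqr_dotv_le.
Qed.

Lemma dotv_le u w : dotv u w <= enorm u * enorm w.
Proof. exact: le_trans (ler_norm _) (normr_dotv_le u w). Qed.

Lemma enormD_le u w : enorm (u + w) <= enorm u + enorm w.
Proof.
rewrite -ler_sqr ?nnegrE ?addr_ge0 ?enorm_ge0 // sqr_enormD sqrrD -mulr_natl.
by have := dotv_le u w; lra.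
Qed.

Section clip.
Variable v : 'rV[R]_d.
Context {c : R}.
Hypothesis c_gt0 : 0 < c.

Lemma clipE u : clip u c = (c / Num.max (enorm u) c) *: u.
Proof.
rewrite /clip; have [->|u_neq0] := eqVneq u 0; first by rewrite scaler0.
have u_gt0 : 0 < enorm u by rewrite lt_def enorm_eq0 u_neq0 enorm_ge0.
congr (_ *: _); have [u_le|c_lt_u] := leP (enorm u) c.
  by rewrite divff ?gt_eqF // min_l // ler_pdivlMr // mul1r.
by rewrite min_r // ler_pdivrMr // mul1r ltW.
Qed.

Lemma clip_id u : enorm u <= c -> clip u c = u.
Proof. by move=> u_le; rewrite clipE max_r // divff ?gt_eqF // scale1r. Qed.

Lemma dotv_clip u : dotv v (clip u c) = c * dotv v u / Num.max (enorm u) c.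
Proof. by rewrite clipE dotvZr mulrAC. Qed.

Lemma normr_dotv_clip_le u : `|dotv v (clip u c)| <= c * enorm v.
Proof.
have max_gt0 : 0 < Num.max (enorm u) c by rewrite lt_max c_gt0 orbT.
rewrite dotv_clip normrM normfV normrM (gtr0_norm c_gt0) (gtr0_norm max_gt0).
rewrite ler_pdivrMr // -mulrA ler_pM2l //.
apply: le_trans (normr_dotv_le v u) _.
by rewrite ler_wpM2l ?enorm_ge0 // le_max lexx.
Qed.

Local Notation f x := (dotv v (clip (v + x) c)).

Lemma clip_symE x : f x + f (- x) =
  sym_clip c (enorm v) (dotv v x) (enorm (v + x)) (enorm (v - x)).
Proof. by rewrite !dotv_clip !dotvDr dotvNr /sym_clip sqr_enorm. Qed.

Lemma clip_sym_wlog (P : R -> R -> Prop) :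
    (forall x, 0 <= dotv v x -> P (enorm x) (f x + f (- x))) ->
  forall x, P (enorm x) (f x + f (- x)).
Proof.
move=> hP x; have [/hP//|t_lt0] := leP 0 (dotv v x).
have := hP (- x); rewrite opprK enormN [f (- x) + _]addrC; apply.
by rewrite dotvNr oppr_ge0 ltW.
Qed.

Lemma clip_sym_ge0 x : 0 <= f x + f (- x).
Proof.
apply: (clip_sym_wlog (fun _ y => 0 <= y)) => {}x t_ge0.
rewrite clip_symE; apply: (@sym_clip_ge0 _ _ _ (enorm x));
  rewrite ?enorm_ge0 ?dotv_le ?sqr_enormB ?sqr_enormD //.
Qed.

Lemma clip_sym_small x : enorm v + enorm x <= c -> f x + f (- x) = 2 * enorm v ^+ 2.
Proof.
move=> vx_le; rewrite !clip_id; last 2 first.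
- by rewrite (le_trans (enormD_le _ _)) ?enormN.
- by rewrite (le_trans (enormD_le _ _)).
by rewrite !dotvDr dotvNr sqr_enorm; ring.
Qed.

Lemma clip_sym_large x : 3 / 4 * c < enorm v -> enorm x < c / 4 ->
  2 * (3 / 4 * c * enorm v) <= f x + f (- x).
Proof.
move=> v_large; apply: (clip_sym_wlog (fun r y => r < c / 4 -> _ <= y)) => {}x.
move=> t_ge0 x_small; rewrite clip_symE.
apply: (@sym_clip_ge_large _ _ _ (enorm x));
  rewrite ?enorm_ge0 ?dotv_le ?sqr_enormB ?sqr_enormD //.
Qed.

End clip.
End euclidean.

Section coordinates.
Context {R : realType} {d : nat}.
Local Notation T := (Rd R d).
Implicit Types (a b v w : 'rV[R]_d).

Lemma measurable_boxesE : @measurable _ T = <<s @boxes R d >>.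
Proof. by []. Qed.

Lemma measurable_box a b : measurable (box a b : set T).
Proof. by apply: sub_sigma_algebra; exists a, b. Qed.

Lemma row_bounded (x : 'rV[R]_d) : exists n : nat, forall i, `|x ord0 i| < n%:R.
Proof.
have [N _ hN] := filter_forall _ (fun i => nbhs_infty_gtr `|x ord0 i|).
by exists N; apply: (hN N) => /=.
Qed.

Lemma measurable_coord i : measurable_fun setT (fun x : T => x ord0 i).
Proof.
apply: (measurability _ (RGenOInfty.measurableE R)) => // _ [_ [r ->] <-].
pose lo n : 'rV[R]_d := \row_j (if j == i then r else - n%:R).
suff -> : setT `&` (fun x : T => x ord0 i) @^-1` `]r, +oo[%classic =
    \bigcup_n box (lo n) (const_mx n%:R).
  by apply: bigcupT_measurable => n; exact: measurable_box.
apply/seteqP; split => [x [_ /=]|x [n _ /(_ i)]]; last first.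
  by rewrite /= !mxE eqxx in_itv /= andbT => /andP[].
rewrite in_itv /= andbT => r_lt; have [n x_lt] := row_bounded x.
exists n => // j; rewrite !mxE; move: (x_lt j); rewrite ltr_norml => /andP[lo_lt lt_hi].
by rewrite (ltW lt_hi) andbT; case: eqP => [->|_].
Qed.

Lemma measurable_coordwise (I : 'I_d -> interval R) :
  measurable [set x : T | forall i, x ord0 i \in I i].
Proof.
rewrite (_ : [set x | _] =
    \bigcap_(i in [set: 'I_d]) ((fun x : T => x ord0 i) @^-1` [set` I i])).
  apply: fin_bigcap_measurable => [|i _]; first exact: finite_finset.
  by rewrite -[X in measurable X]setTI; exact: measurable_coord.
by apply/seteqP; split => [x x_in i _|x x_in i]; exact: x_in.
Qed.

Lemma measurable_translation w : measurable_fun setT (fun x : T => (w + x : T)).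
Proof.
apply: (measurability _ measurable_boxesE) => // _ [_ [a [b ->]] <-].
rewrite setTI (_ : _ @^-1` _ = box (a - w) (b - w)); first exact: measurable_box.
by apply/seteqP; split => x x_in i; move: (x_in i); rewrite !mxE => /andP[? ?];
  apply/andP; split; lra.
Qed.

Lemma measurable_opp : measurable_fun setT (fun x : T => (- x : T)).
Proof.
apply: (measurability _ measurable_boxesE) => // _ [_ [a [b ->]] <-].
rewrite setTI (_ : _ @^-1` _ =
    [set x : T | forall i, x ord0 i \in `[- b ord0 i, - a ord0 i[]).
  exact: measurable_coordwise.
by apply/seteqP; split => x x_in i; move: (x_in i);
  rewrite ?in_itv /= !mxE => /andP[? ?]; apply/andP; split; lra.
Qed.

Lemma measurable_dotv w : measurable_fun setT (fun x : T => dotv w x).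
Proof.
by apply: measurable_sum => i; apply: measurable_funM => //; exact: measurable_coord.
Qed.

Lemma measurable_enorm : measurable_fun setT (fun x : T => enorm x).
Proof.
have msqrt : measurable_fun setT (@Num.sqrt R).
  by apply: nondecreasing_measurable => //; exact: ler_wsqrtr.
apply: (measurableT_comp msqrt).
by apply: measurable_sum => i; apply: measurable_funM; exact: measurable_coord.
Qed.

Lemma measurable_enorm_lt r : measurable [set x : T | enorm x < r].
Proof.
rewrite -[X in measurable X]setTI.
rewrite (_ : [set x | _] = (fun x : T => enorm x) @^-1` `]-oo, r[%classic).
  exact: measurable_enorm.
by apply/seteqP; split => x /=; rewrite in_itv.
Qed.

Lemma measurable_dotv_clip v {c : R} : 0 < c ->
  measurable_fun setT (fun u : T => dotv v (clip u c)).
Proof.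
move=> c_gt0; have minv : measurable_fun setT (fun y : R => (Num.max y c)^-1).
  apply: nonincreasing_measurable => // y z y_le.
  by rewrite lef_pV2 ?posrE ?lt_max ?c_gt0 ?orbT // ge_max !le_max y_le lexx !orbT.
rewrite (_ : (fun u => _) =
    fun u : T => c * dotv v u * (Num.max (enorm u) c)^-1).
  apply: measurable_funM; first by apply: measurable_funM => //; exact: measurable_dotv.
  exact: (measurableT_comp minv measurable_enorm).
by apply/funext => u; rewrite dotv_clip.
Qed.

End coordinates.

Section open_boxes.
Context {R : realType} {d : nat}.
Local Notation T := (Rd R d).
Implicit Types (a b : 'rV[R]_d).

(* Negation maps open boxes to open boxes, unlike the half-open generators of the
   sigma-algebra. *)
Definition obox a b : set T := [set x | forall i, a ord0 i < x ord0 i < b ord0 i].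

Definition oboxes : set (set T) := [set A | exists a b, A = obox a b].

Lemma measurable_obox a b : measurable (obox a b).
Proof.
rewrite (_ : obox a b = [set x | forall i, x ord0 i \in `]a ord0 i, b ord0 i[]).
  exact: measurable_coordwise.
by apply/seteqP; split => x x_in i; move: (x_in i); rewrite in_itv.
Qed.

Lemma obox_bigcup_box a b : obox a b = \bigcup_n box a (b - const_mx (harmonic n)).
Proof.
apply/seteqP; split => [x x_in|x [n _ x_in] i]; last first.
  have := @harmonic_gt0 R n; move: (x_in i); rewrite !mxE.
  by move=> /andP[-> le_b]; lra.
have bx_gt0 i : 0 < b ord0 i - x ord0 i.
  by move: (x_in i); rewrite subr_gt0 => /andP[].
have [N _ hN] := filter_forall _ (fun i => near_infty_natSinv_lt (PosNum (bx_gt0 i))).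
exists N => // i; have : harmonic N < b ord0 i - x ord0 i := hN N (leqnn N) i.
by move: (x_in i); rewrite !mxE => /andP[-> _]; lra.
Qed.

Lemma box_bigcap_obox a b : box a b = \bigcap_n obox a (b + const_mx (harmonic n)).
Proof.
apply/seteqP; split => [x x_in n _ i|x x_in i].
  have := @harmonic_gt0 R n; move: (x_in i); rewrite !mxE.
  by move=> /andP[-> le_b]; lra.
have := x_in 0%N I i; move=> /andP[-> _] /=.
rewrite leNgt; apply/negP => b_lt.
have xb_gt0 : 0 < x ord0 i - b ord0 i by rewrite subr_gt0.
have [N _ hN] := near_infty_natSinv_lt (PosNum xb_gt0).
have : harmonic N < x ord0 i - b ord0 i := hN N (leqnn N).
by have := x_in N I i; rewrite !mxE => /andP[_]; lra.
Qed.

Lemma oboxes_setI : setI_closed oboxes.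
Proof.
move=> _ _ [a [b ->]] [a' [b' ->]].
exists (\row_i Num.max (a ord0 i) (a' ord0 i)), (\row_i Num.min (b ord0 i) (b' ord0 i)).
apply/seteqP; split => [x [x_ab x_ab'] i|x x_in].
  move: (x_ab i) (x_ab' i); rewrite !mxE gt_max lt_min.
  by move=> /andP[-> ->] /andP[-> ->].
by split=> i; move: (x_in i); rewrite !mxE gt_max lt_min;
  move=> /and3P[/andP[? ?] ? ?]; apply/andP.
Qed.

Lemma bigcup_obox_setT : \bigcup_n obox (- const_mx n%:R) (const_mx n%:R) = setT.
Proof.
apply/seteqP; split => // x _; have [n x_lt] := row_bounded x.
by exists n => // i; rewrite !mxE -ltr_norml.
Qed.

Lemma measurable_oboxesE : @measurable _ T = <<s oboxes >>.
Proof.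
apply/seteqP; split; last first.
  apply: smallest_sub => [|_ [a [b ->]]]; first exact: sigma_algebra_measurable.
  exact: measurable_obox.
apply: smallest_sub => [|_ [a [b ->]]]; first exact: smallest_sigma_algebra.
rewrite box_bigcap_obox; apply: (@bigcapT_measurable _ (g_sigma_algebraType oboxes)).
by move=> n; apply: sub_sigma_algebra; exists a, (b + const_mx (harmonic n)).
Qed.

Lemma opp_preimage_obox a b :
  (fun x : T => (- x : T)) @^-1` obox a b = obox (- b) (- a).
Proof.
by apply/seteqP; split => x x_in i; move: (x_in i); rewrite !mxE => /andP[? ?];
  apply/andP; split; lra.
Qed.

End open_boxes.

Section density_lower_bound.
Context {d} {T : measurableType d} {R : realType} (mu : {measure set T -> \bar R}).

Lemma integral_density_ge {p g : T -> R} {A : set T} {k : R} : measurable A ->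
    measurable_fun setT p -> measurable_fun setT g ->
    (forall x, 0 <= p x) -> (forall x, 0 <= g x) -> 0 <= k ->
    (forall x, A x -> k <= g x) ->
  (k%:E * \int[mu]_(x in A) (p x)%:E <= \int[mu]_x (p x * g x)%:E)%E.
Proof.
move=> mA mp mg p_ge0 g_ge0 k_ge0 k_le.
have mpg : measurable_fun setT (fun x => (p x * g x)%:E).
  by apply/measurable_EFinP; exact: measurable_funM.
rewrite -ge0_integralZl_EFin //; last 2 first.
- by move=> x _; rewrite lee_fin.
- by apply/measurable_EFinP; exact: measurable_funTS.
under eq_integral do rewrite -EFinM.
apply: (@le_trans _ _ (\int[mu]_(x in A) (p x * g x)%:E)%E).
  apply: ge0_le_integral => //.
  - by move=> x _; rewrite lee_fin mulr_ge0.
  - by apply/measurable_EFinP; apply: measurable_funTS; exact: measurable_funM.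
  - exact: measurable_funTS.
  - by move=> x Ax; rewrite lee_fin mulrC ler_wpM2l ?k_le.
by apply: ge0_subset_integral => // x _; rewrite lee_fin mulr_ge0.
Qed.

End density_lower_bound.

Section lebesgue_reflection.
Context {R : realType} {d : nat}.
Local Notation T := (Rd R d).
Context {lam : {measure set T -> \bar R}}.
Hypothesis lam_box : is_lebesgue_Rd lam.

Lemma lebesgue_obox a b :
  lam (obox a b) = lim (lam (box a (b - const_mx (harmonic n))) @[n --> \oo]).
Proof.
rewrite obox_bigcup_box; apply/esym/cvg_lim => //.
apply: nondecreasing_cvg_mu => [n||n m nm]; first exact: measurable_box.
  by apply: bigcupT_measurable => n; exact: measurable_box.
apply/subsetPset => x x_in i; move: (x_in i); rewrite !mxE => /andP[-> le_b].
have : harmonic m <= harmonic n :> R by rewrite /= lef_pV2 ?posrE // ler_nat ltnS.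
lra.
Qed.

Lemma lebesgue_obox_opp a b : lam (obox (- b) (- a)) = lam (obox a b).
Proof.
rewrite !lebesgue_obox; apply/congr_lim/funext => n /=.
rewrite !lam_box; congr EFin; apply: eq_bigr => i _; rewrite !mxE.
by congr (Num.max _ 0); ring.
Qed.

Lemma lebesgue_opp A : measurable A -> lam ((fun x : T => (- x : T)) @^-1` A) = lam A.
Proof.
move=> mA; apply/esym; change (lam A = pushforward lam (fun x : T => (- x : T)) A).
apply: (measure_unique oboxes (fun n => obox (- const_mx n%:R) (const_mx n%:R))).
- exact: measurable_oboxesE.
- exact: oboxes_setI.
- by move=> n; exists (- const_mx n%:R), (const_mx n%:R).
- exact: bigcup_obox_setT.
- exact: measurable_opp.
- move=> mopp _ [a [b ->]].
  change (lam (obox a b) = lam ((fun x : T => (- x : T)) @^-1` obox a b)).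
  by rewrite opp_preimage_obox lebesgue_obox_opp.
- move=> n; apply: (@le_lt_trans _ _ (lam (box (- const_mx n%:R) (const_mx n%:R)))).
    apply: le_measure; rewrite ?inE; [exact: measurable_obox|exact: measurable_box|].
    by move=> x x_in i; case/andP: (x_in i) => -> /ltW.
  by rewrite lam_box ltry.
- exact: mA.
Qed.

Lemma integral_opp (f : T -> \bar R) : measurable_fun setT f ->
    lam.-integrable setT (fun x => f (- x)%R) ->
  (\int[lam]_x f (- x)%R = \int[lam]_x f x)%E.
Proof.
move=> mf intf.
have := integral_pushforward (mu := lam) measurable_opp mf intf measurableT.
rewrite preimage_setT => <-.
apply: eq_measure_integral => [|mopp A mA _]; first exact: measurable_opp.
exact (lebesgue_opp A mA).
Qed.

Section even_density.
Context {p : T -> R}.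
Hypotheses (p_density : is_density lam p) (p_even : forall x, p x = p (- x)).

Lemma integrable_density : lam.-integrable setT (EFin \o p).
Proof.
have [mp p_ge0 p_int1] := p_density.
apply/integrableP; split; first exact/measurable_EFinP.
by under eq_integral do rewrite /= ger0_norm //; rewrite p_int1 ltry.
Qed.

Lemma integrable_density_mul {g : T -> R} {M : R} : measurable_fun setT g ->
  (forall x, `|g x| <= M) -> lam.-integrable setT (fun x => (p x * g x)%:E).
Proof.
move=> mg g_le; apply: (eq_integrable _ ((EFin \o p) \* (EFin \o g))%E) => //.
apply: integrableMl integrable_density mg _ => //.
exists M; split => [|N M_lt x _]; first exact: num_real.
exact: le_trans (g_le x) (ltW M_lt).
Qed.

Lemma dexpect_symmetrize {g : T -> R} {M : R} : measurable_fun setT g ->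
    (forall x, `|g x| <= M) ->
  (dexpect lam p g + dexpect lam p g = dexpect lam p (fun x => (g x + g (- x))%R))%E.
Proof.
move=> mg g_le; have [mp _ _] := p_density.
have mgN : measurable_fun setT (fun x : T => g (- x)).
  exact: (measurableT_comp mg measurable_opp).
have int_pgN := integrable_density_mul mgN (fun x => g_le (- x)).
have reflect : (\int[lam]_x (p x * g x)%:E = \int[lam]_x (p x * g (- x))%:E)%E.
  rewrite -(integral_opp (fun x => (p x * g x)%:E)).
  - by apply: eq_integral => x _; rewrite -p_even.
  - by apply/measurable_EFinP; exact: measurable_funM.
  - by apply: (eq_integrable measurableT _ _ _ int_pgN) => x _; rewrite -p_even.
rewrite /dexpect [X in (_ + X)%E]reflect -integralD //.
  by apply: eq_integral => x _; rewrite mulrDr EFinD.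
exact: integrable_density_mul mg g_le.
Qed.

Lemma dexpect_even_density_ge {g : T -> R} {M : R} {A : set T} {k : R} :
    measurable A -> measurable_fun setT g -> (forall x, `|g x| <= M) ->
    (forall x, 0 <= g x + g (- x)) -> 0 <= k ->
    (forall x, A x -> 2 * k <= g x + g (- x)) ->
  (k%:E * dprob lam p A <= dexpect lam p g)%E.
Proof.
move=> mA mg g_le gN_ge0 k_ge0 k_le; have [mp p_ge0 _] := p_density.
have E_fin : dexpect lam p g \is a fin_num.
  exact/integrable_fin_num/(integrable_density_mul mg g_le).
have P_fin : dprob lam p A \is a fin_num.
  have := integrableS measurableT mA (subsetT _) integrable_density.
  exact: integrable_fin_num.
have : ((2 * k)%:E * dprob lam p A <= dexpect lam p g + dexpect lam p g)%E.
  rewrite (dexpect_symmetrize mg g_le); apply: integral_density_ge => //.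
  - exact: measurable_funD mg (measurableT_comp mg measurable_opp).
  - by rewrite mulr_ge0.
by rewrite -(fineK E_fin) -(fineK P_fin) -EFinD -!EFinM !lee_fin; nra.
Qed.

End even_density.
End lebesgue_reflection.

Theorem theorem2 (R : realType) (d : nat)
    (lam : {measure set (Rd R d) -> \bar R}) (Hlam : is_lebesgue_Rd lam)
    (p : Rd R d -> R) (Hp : is_density lam p)
    (Hsym : forall xi : Rd R d, p xi = p (- xi))
    (c : R) (hc : 0 < c) (v : 'rV[R]_d) :
  let E := dexpect lam p (fun xi => dotv v (clip (v + xi) c)) in
  let q := dprob lam p [set xi | enorm xi < c / 4] in
  (enorm v <= 3 / 4 * c -> ((enorm v ^+ 2)%:E * q <= E)%E) /\
  (3 / 4 * c < enorm v -> ((3 / 4 * c * enorm v)%:E * q <= E)%E).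
Proof.
move=> E q; pose f (xi : Rd R d) := dotv v (clip (v + xi) c).
have mf : measurable_fun setT f.
  exact: measurableT_comp (measurable_dotv_clip v hc) (measurable_translation v).
have lower k : 0 <= k ->
    (forall xi, enorm xi < c / 4 -> 2 * k <= f xi + f (- xi)) -> (k%:E * q <= E)%E.
  move=> k_ge0 k_le; apply: (dexpect_even_density_ge Hlam Hp Hsym
    (measurable_enorm_lt _) mf _ _ k_ge0 k_le).
  - by move=> xi; exact: normr_dotv_clip_le.
  - by move=> xi; exact: (clip_sym_ge0 v hc xi).
split => v_le; apply: lower.
- exact: sqr_ge0.
- by move=> xi xi_lt; rewrite clip_sym_small //; lra.
- by apply: mulr_ge0; [apply: mulr_ge0 | exact: enorm_ge0]; lra.
- by move=> xi; exact: clip_sym_large.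
Qed.
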